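(* Let $m,m',\ell\in\mathbb{N}$. Let $x\in\mathbb{R}^m$ and $x'\in\mathbb{R}^{m'}$ be two time series with $\mathrm{set}(x)=\mathrm{set}(x')$ and with the same set of $\ell$-profiles, i.e. $D_{(x,\ell)}=D_{(x',\ell)}$. Then for every $y\in\mathbb{R}^\ell$ we have $d_{dF}(x,y)=d_{dF}(x',y)$.
   Context: A time series of complexity $m$ is a vector $x=(x_1,\dots,x_m)\in\mathbb{R}^m$; $\mathrm{set}(x)=\{x_i: 1\le i\le m\}$, and for $z\in\mathrm{set}(x)$, $\mathrm{rank}_x(z)$ is the rank of $z$ in $\mathrm{set}(x)$ (ordered increasingly). For $x\in\mathbb{R}^m$ and $y\in\mathbb{R}^\ell$, a traversal is a sequence of index pairs $(i,j)\in[m]\times[\ell]$ starting at $(1,1)$, ending at $(m,\ell)$, in which each pair $(i,j)$ is followed by one of $(i,j+1)$, $(i+1,j)$, $(i+1,j+1)$; $x_i$ and $y_j$ are matched if $(i,j)$ occurs in it. The discrete Fréchet distance $d_{dF}(x,y)$ is the minimum over all traversals $T$ of $\max_{(i,j)\in T}|x_i-y_j|$. For a traversal $M$ of $x$ with a time series of complexity $\ell$, the traversal sectors are $S^{(x,M)}_j=\{x_i: i\in[m],\ x_i \text{ and } y_j \text{ matched by } M\}$ for $j\in[\ell]$, and the $\ell$-profile of $(x,M)$ is the sequence $\big((\mathrm{rank}_x(\min S^{(x,M)}_1),\mathrm{rank}_x(\max S^{(x,M)}_1)),\dots,(\mathrm{rank}_x(\min S^{(x,M)}_\ell),\mathrm{rank}_x(\max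 S^{(x,M)}_\ell))\big)$. $D_{(x,\ell)}$ denotes the set of all $\ell$-profiles of $(x,M)$ over all traversals $M$ between time series of complexity $m$ and time series of complexity $\ell$. *)

(* Time series are sequences over an
   arbitrary R : realType; the complexity of x is size x; indices are 0-based. *)
From mathcomp Require Import all_boot all_order all_algebra.
From mathcomp Require Import all_classical all_reals.
Set Implicit Arguments.
Unset Strict Implicit.
Unset Printing Implicit Defensive.
Import Order.TTheory GRing.Theory Num.Theory.
Local Open Scope ring_scope.

Definition trav_step (p q : nat * nat) : bool :=
  [|| (q == (p.1, p.2.+1)), (q == (p.1.+1, p.2)) | (q == (p.1.+1, p.2.+1))].

Definition is_traversal (m l : nat) (T : seq (nat * nat)) : bool :=
  match T with
  | [::] => false
  | p :: T' =>
      [&& p == (0%N, 0%N), last p T' == (m.-1, l.-1),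
          all (fun q => (q.1 < m)%N && (q.2 < l)%N) T & path trav_step p T']
  end.

Definition trav_cost (R : realType) (x y : seq R) (T : seq (nat * nat)) : R :=
  \big[Num.max/0]_(p <- T) `|x`_p.1 - y`_p.2|.

Definition dF (R : realType) (x y : seq R) : R :=
  inf [set c | exists T, is_traversal (size x) (size y) T /\ c = trav_cost x y T]%classic.

Definition rank (R : realType) (x : seq R) (z : R) : nat :=
  (count (fun w => w < z) (undup x)).+1.

Definition sector (R : realType) (x : seq R) (M : seq (nat * nat)) (j : nat) : seq R :=
  [seq x`_(p.1) | p <- M & p.2 == j].

Definition seq_min (R : realType) (s : seq R) : R :=
  \big[Num.min/head 0 s]_(z <- s) z.
Definition seq_max (R : realType) (s : seq R) : R :=
  \big[Num.max/head 0 s]_(z <- s) z.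

Definition profile (R : realType) (x : seq R) (l : nat) (M : seq (nat * nat))
  : seq (nat * nat) :=
  [seq (rank x (seq_min (sector x M j)), rank x (seq_max (sector x M j)))
  | j <- iota 0 l].

Definition Dprofiles (R : realType) (x : seq R) (l : nat) : set (seq (nat * nat)) :=
  [set P | exists M, is_traversal (size x) l M /\ P = profile x l M]%classic.

From mathcomp Require Import all_boot all_order all_algebra.
From mathcomp Require Import all_classical all_reals.
From mathcomp Require Import lra zify.

(* A traversal's cost only depends, for each j, on the two extreme values of
   the sector S_j: every value v of S_j lies between them, and |v - y_j| is at
   most the larger of the distances from y_j to the two endpoints. The profile
   records the ranks of these extremes in set(x); ranks depend only on set(x)
   and are injective on it. Hence a traversal of x and a traversal of x' with
   the same profile have the same sector extremes, hence the same cost, so x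
   and x' have the same set of traversal costs and the same infimum. *)
Set Implicit Arguments.
Unset Strict Implicit.
Unset Printing Implicit Defensive.
Import Order.TTheory GRing.Theory Num.Theory.
Local Open Scope ring_scope.

Section TimeSeries.
Variable R : realType.
Implicit Types (x y s : seq R) (T : seq (nat * nat)).

Lemma mem_seq_min s : s != [::] -> seq_min s \in s.
Proof.
case: s => [//|a s] _; rewrite /seq_min big_seq.
by elim/big_ind: _ => [|u v uin vin|//]; [exact: mem_head | rewrite minEle; case: ifP].
Qed.

Lemma mem_seq_max s : s != [::] -> seq_max s \in s.
Proof.
case: s => [//|a s] _; rewrite /seq_max big_seq.
by elim/big_ind: _ => [|u v uin vin|//]; [exact: mem_head | rewrite maxEle; case: ifP].
Qed.

Lemma seq_min_le s z : z \in s -> seq_min s <= z.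
Proof. by move=> zs; apply: ge_bigmin_seq. Qed.

Lemma le_seq_max s z : z \in s -> z <= seq_max s.
Proof. by move=> zs; apply: le_bigmax_seq. Qed.

Lemma ltn_count_lt s a b : a < b -> a \in s ->
  (count (fun w : R => (w < a)%R) s < count (fun w : R => (w < b)%R) s)%N.
Proof.
move=> ltab; elim: s => //= c s IH; rewrite inE => /predU1P[<-|/IH].
  rewrite ltxx ltab add0n add1n ltnS; apply: sub_count => w /= lt_wa.
  exact: lt_trans lt_wa ltab.
by case: (ltrP c a) => [/lt_trans/(_ ltab) ->|]; case: (c < b); lia.
Qed.

Lemma eq_rank x x' : x =i x' -> rank x =1 rank x'.
Proof.
move=> eqxx' z; congr S; apply/permP/uniq_perm; rewrite ?undup_uniq //.
by move=> w; rewrite !mem_undup.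
Qed.

Lemma rank_inj x : {in x &, injective (rank x)}.
Proof.
move=> a b; rewrite /rank -!(mem_undup x) => ax bx [].
by case: (ltgtP a b) => // [/ltn_count_lt/(_ ax)|/ltn_count_lt/(_ bx)]; lia.
Qed.

Lemma trav_path_column p T j : path trav_step p T ->
  (p.2 <= j <= (last p T).2)%N -> exists2 q, q \in p :: T & q.2 = j.
Proof.
elim: T p => [|q T IH] p /=.
  by move=> _ hj; exists p; rewrite ?mem_head //; lia.
move=> /andP[step_pq path_qT] hj.
have [<-|neq_pj] := eqVneq p.2 j; first by exists p; rewrite ?mem_head.
have le_qj : (q.2 <= j)%N by move: step_pq => /or3P[] /eqP -> /=; lia.
have /(IH q path_qT) [r rqT <-] : (q.2 <= j <= (last q T).2)%N by lia.
by exists r; rewrite // inE rqT orbT.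
Qed.

Lemma traversal_in_range m l T q : is_traversal m l T -> q \in T ->
  (q.1 < m)%N && (q.2 < l)%N.
Proof. by case: T => [//|p T] /and4P[_ _ /allP inT _]; exact: inT. Qed.

Lemma traversal_column m l T j : is_traversal m l T -> (j < l)%N ->
  exists2 q, q \in T & q.2 = j.
Proof.
case: T => [//|p T] /and4P[/eqP p0 /eqP pend _ pathT] ltjl.
by apply: trav_path_column pathT _; rewrite pend p0 /=; lia.
Qed.

Lemma sectorP x T j v :
  reflect (exists2 q, q \in T & q.2 = j /\ v = x`_q.1) (v \in sector x T j).
Proof.
apply: (iffP mapP) => [[q]|[q qT [qj ->]]].
  by rewrite mem_filter => /andP[/eqP qj qT] ->; exists q.
by exists q; rewrite // mem_filter qj eqxx.
Qed.

Lemma sector_neq0 x l T j : is_traversal (size x) l T -> (j < l)%N ->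
  sector x T j != [::].
Proof.
move=> travT /(traversal_column travT) [q qT qj].
have qin : x`_q.1 \in sector x T j by apply/sectorP; exists q.
by apply/eqP => sector0; rewrite sector0 in qin.
Qed.

Lemma sector_subset x l T j : is_traversal (size x) l T -> {subset sector x T j <= x}.
Proof.
move=> travT v /sectorP [q qT [_ ->]]; apply: mem_nth.
by case/andP: (traversal_in_range travT qT).
Qed.

Lemma ler_dist_between (a b v t c : R) : a <= v <= b ->
  `|a - t| <= c -> `|b - t| <= c -> `|v - t| <= c.
Proof.
move=> /andP[le_av le_vb]; rewrite !ler_norml => /andP[? ?] /andP[? ?].
by apply/andP; split; lra.
Qed.

Lemma trav_cost_le x y l T c : is_traversal (size x) l T ->
  (trav_cost x y T <= c) <-> (0 <= c /\ forall j, (j < l)%N ->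
     `|seq_min (sector x T j) - y`_j| <= c /\ `|seq_max (sector x T j) - y`_j| <= c).
Proof.
move=> travT; split => [cost_le | [c_ge0 extrema_le]].
  have le_cost p : p \in T -> `|x`_p.1 - y`_p.2| <= c.
    move=> pT; apply: le_trans cost_le.
    exact: (le_bigmax_seq _ _ _ (fun q => `|x`_q.1 - y`_q.2|) pT).
  split; first exact: le_trans (bigmax_ge_id _ _ _ _) cost_le.
  move=> j ltjl; have sector_ne := sector_neq0 travT ltjl.
  by split; [move: (mem_seq_min sector_ne) | move: (mem_seq_max sector_ne)];
    move=> /sectorP [q qT [<- ->]]; exact: le_cost.
rewrite /trav_cost big_seq; apply: bigmax_le => // p pT.
have /andP[_ ltpl] := traversal_in_range travT pT.
have pin : x`_p.1 \in sector x T p.2 by apply/sectorP; exists p.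
have [min_le max_le] := extrema_le _ ltpl.
by apply: ler_dist_between min_le max_le; rewrite seq_min_le ?le_seq_max.
Qed.

Lemma trav_cost_eq x x' y T T' :
  is_traversal (size x) (size y) T -> is_traversal (size x') (size y) T' ->
  (forall j, (j < size y)%N -> seq_min (sector x T j) = seq_min (sector x' T' j)
                         /\ seq_max (sector x T j) = seq_max (sector x' T' j)) ->
  trav_cost x y T = trav_cost x' y T'.
Proof.
move=> travT travT' eq_extrema.
have le_iff c : trav_cost x y T <= c <-> trav_cost x' y T' <= c.
  rewrite (trav_cost_le _ _ travT) (trav_cost_le _ _ travT').
  by split=> -[c_ge0 le_c]; split=> // j ltjl;
    move: (le_c j ltjl); case: (eq_extrema j ltjl) => -> ->.
by apply/le_anti/andP; split; [apply/(le_iff _).2 | apply/(le_iff _).1].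
Qed.

Lemma nth_profile x l M j : (j < l)%N ->
  nth (0%N, 0%N) (profile x l M) j =
  (rank x (seq_min (sector x M j)), rank x (seq_max (sector x M j))).
Proof. by move=> ltjl; rewrite (nth_map 0%N) ?size_iota // nth_iota. Qed.

Lemma profile_sector_extrema x x' l T T' : x =i x' ->
  is_traversal (size x) l T -> is_traversal (size x') l T' ->
  profile x l T = profile x' l T' ->
  forall j, (j < l)%N -> seq_min (sector x T j) = seq_min (sector x' T' j)
                      /\ seq_max (sector x T j) = seq_max (sector x' T' j).
Proof.
move=> eqxx' travT travT' eq_profile j ltjl.
have := congr1 (fun P => nth (0%N, 0%N) P j) eq_profile.
rewrite !nth_profile // -!(eq_rank eqxx') => /pair_equal_spec[eq_min eq_max].
have ne := sector_neq0 travT ltjl; have ne' := sector_neq0 travT' ltjl.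
have in_x v : v \in sector x' T' j -> v \in x.
  by move=> /(sector_subset travT'); rewrite eqxx'.
split; [apply: (rank_inj _ _ eq_min) | apply: (rank_inj _ _ eq_max)].
- exact: sector_subset travT _ (mem_seq_min ne).
- exact: in_x (mem_seq_min ne').
- exact: sector_subset travT _ (mem_seq_max ne).
- exact: in_x (mem_seq_max ne').
Qed.

Definition trav_costs x y : set R :=
  [set c | exists T, is_traversal (size x) (size y) T /\ c = trav_cost x y T]%classic.

Lemma trav_costs_subset x x' y : x =i x' ->
  (Dprofiles x (size y) `<=` Dprofiles x' (size y))%classic ->
  (trav_costs x y `<=` trav_costs x' y)%classic.
Proof.
move=> eqxx' subD _ [T [travT ->]].
have [T' [travT' eq_profile]] : Dprofiles x' (size y) (profile x (size y) T).
  by apply: subD; exists T.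
exists T'; split=> //; apply: trav_cost_eq => //.
exact: profile_sector_extrema eq_profile.
Qed.

End TimeSeries.

Theorem lemma4p4 (R : realType) (m m' l : nat) (x x' : seq R) :
  size x = m -> size x' = m' ->
  x =i x' ->
  Dprofiles x l = Dprofiles x' l ->
  forall y : seq R, size y = l -> dF x y = dF x' y.
Proof.
move=> _ _ eqxx' eqD y size_y; rewrite -size_y in eqD.
have eqx'x : x' =i x by move=> z; rewrite eqxx'.
apply: (congr1 inf); apply/seteqP.
by split; apply: trav_costs_subset; rewrite ?eqD.
Qed.
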